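(* Consider the stochastic bipartite matching model described in the context, under the stability condition, with stationary distribution $\pi$. For $\mathcal{A}\in\mathcal{J}_0$ define $\ell_{\mathcal{I}}(\mathcal{A})=\sum_{(c,d)\in\Pi_{\mathcal{A}}}|c|\,\pi(c,d)$ (so that $\ell_{\mathcal{I}}(\mathcal{A})/\pi(\mathcal{A})$ is the stationary mean number of unmatched customers given that the set of unmatched classes is $\mathcal{A}$), with the convention $\ell_{\mathcal{I}}(\mathcal{A})=0$ if $\mathcal{A}\notin\mathcal{J}_0$. Then the stationary mean number of unmatched customers is $L_{\mathcal{I}}=\sum_{\mathcal{A}\in\mathcal{J}_0}\ell_{\mathcal{I}}(\mathcal{A})$, $\ell_{\mathcal{I}}(\emptyset)=0$, and for each $\mathcal{A}\in\mathcal{J}$, \[ \begin{aligned} \Delta(\mathcal{A})\,\ell_{\mathcal{I}}(\mathcal{A}) ={}& \mu(\mathcal{K}(\mathcal{A}\cap\mathcal{I}))\,\lambda(\mathcal{I}(\mathcal{A}\cap\mathcal{K}))\,\pi(\mathcal{A}) + \mu(\mathcal{A}\cap\mathcal{K})\sum_{i\in\mathcal{A}\cap\mathcal{I}}\lambda_i\,\ell_{\mathcal{I}}(\mathcal{A}\setminus\{i\})\\ &+\lambda(\mathcal{A}\cap\mathcal{I})\sum_{k\in\mathcal{A}\cap\mathcal{K}}\mu_k\,\ell_{\mathcal{I}}(\mathcal{A}\setminus\{k\}) + \sum_{i\in\mathcal{A}\cap\mathcal{I}}\sum_{k\in\mathcal{A}\cap\mathcal{K}}\lambda_i\mu_k\,\ell_{\mathcal{I}}(\mathcal{A}\setminus\{i,k\}).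 \end{aligned} \]
   Context: Let $\mathcal{I}$ (customer classes) and $\mathcal{K}$ (server classes) be disjoint finite non-empty sets, and consider a connected bipartite graph (the compatibility graph) on $\mathcal{I}\cup\mathcal{K}$ whose edges all join an element of $\mathcal{I}$ to an element of $\mathcal{K}$; write $i\sim k$ if $i\in\mathcal{I}$ and $k\in\mathcal{K}$ are adjacent and $i\nsim k$ otherwise. For $i\in\mathcal{I}$ let $\mathcal{K}_i=\{k\in\mathcal{K}: i\sim k\}$ and for $k\in\mathcal{K}$ let $\mathcal{I}_k=\{i\in\mathcal{I}: i\sim k\}$. Let $\lambda_i>0$ ($i\in\mathcal{I}$) and $\mu_k>0$ ($k\in\mathcal{K}$) with $\sum_i\lambda_i=\sum_k\mu_k=1$. For $\mathcal{A}\subseteq\mathcal{I}$ write $\lambda(\mathcal{A})=\sum_{i\in\mathcal{A}}\lambda_i$ and $\mathcal{K}(\mathcal{A})=\bigcup_{i\in\mathcal{A}}\mathcal{K}_i$; for $\mathcal{A}\subseteq\mathcal{K}$ write $\mu(\mathcal{A})=\sum_{k\in\mathcal{A}}\mu_k$ and $\mathcal{I}(\mathcal{A})=\bigcup_{k\in\mathcal{A}}\mathcal{I}_k$. Model: time is slotted; in each slot exactly one customer and one server arrive, the customer being of class $i$ with probability $\lambda_i$ and the server of class $k$ with probability $\mu_k$, independently within and across slots. Unmatched customers and unmatched servers wait in two queues in arrival order. Upon each arrival (first-come-first-matched policy): (1) the incoming customer is matched with the longest-waiting compatible unmatched server, if any; (2) the incoming server is matched with the longest-waiting compatible unmatched customer,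 if any; (3) if neither can be matched with a waiting item, they are matched with each other if compatible; (4) any incoming item still unmatched is appended to the back of its queue. Matched items leave immediately. The state is $(c,d)$ with $c=(c_1,\dots,c_n)$ the classes of unmatched customers and $d=(d_1,\dots,d_n)$ the classes of unmatched servers, in arrival order (the two lengths are always equal); the state space is $\Pi=\bigcup_{n\ge0}\{(c,d)\in\mathcal{I}^n\times\mathcal{K}^n: c_p\nsim d_q\ \forall p,q\}$, and $\varnothing$ denotes the empty state. For a sequence $c$, $|c|$ denotes its length. Stability condition (assumed): $\lambda(\mathcal{A})<\mu(\mathcal{K}(\mathcal{A}))$ for every non-empty $\mathcal{A}\subsetneq\mathcal{I}$ (equivalently $\mu(\mathcal{A})<\lambda(\mathcal{I}(\mathcal{A}))$ for every non-empty $\mathcal{A}\subsetneq\mathcal{K}$). Then the Markov chain of states is ergodic with stationary distribution $\pi(c,d)=\pi(\varnothing)\prod_{p=1}^n \frac{\lambda_{c_p}}{\mu(\mathcal{K}(\{c_1,\dots,c_p\}))}\frac{\mu_{d_p}}{\lambda(\mathcal{I}(\{d_1,\dots,d_p\}))}$, $(c,d)\in\Pi$. Let $\mathcal{J}$ be the family of independent sets $\mathcal{A}\subseteq\mathcal{I}\cup\mathcal{K}$ of the compatibility graph such that $\mathcal{A}\cap\mathcal{I}$ and $\mathcal{A}\cap\mathcal{K}$ are both non-empty, and $\mathcal{J}_0=\mathcal{J}\cup\{\emptyset\}$. For $\mathcal{A}\in\mathcal{J}_0$, let $\Pi_{\mathcal{A}}$ be the set of $(c,d)\in\Pi$ with $\{c_1,\dots,c_n\}=\mathcal{A}\cap\mathcal{I}$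 and $\{d_1,\dots,d_n\}=\mathcal{A}\cap\mathcal{K}$, and $\pi(\mathcal{A})=\sum_{(c,d)\in\Pi_{\mathcal{A}}}\pi(c,d)$; by convention $\pi(\mathcal{A})=0$ if $\mathcal{A}\notin\mathcal{J}_0$. For $\mathcal{A}\in\mathcal{J}$, $\Delta(\mathcal{A})=\mu(\mathcal{K}(\mathcal{A}\cap\mathcal{I}))\,\lambda(\mathcal{I}(\mathcal{A}\cap\mathcal{K}))-\lambda(\mathcal{A}\cap\mathcal{I})\,\mu(\mathcal{A}\cap\mathcal{K})$. *)

From mathcomp Require Import all_boot all_order all_algebra.
From mathcomp Require Import all_classical all_reals all_analysis.
Set Implicit Arguments. Unset Strict Implicit. Unset Printing Implicit Defensive.
Import Order.TTheory GRing.Theory Num.Theory.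
Local Open Scope ring_scope.

Section Model.
Variables (R : realType) (I K : finType) (adj : I -> K -> bool).
Variables (lam : I -> R) (mu : K -> R).

Definition cgraph : rel (I + K)%type := fun x y =>
  match x, y with
  | inl i, inr k => adj i k
  | inr k, inl i => adj i k
  | _, _ => false
  end.

Definition graph_connected : Prop := forall x y : (I + K)%type, connect cgraph x y.

Definition lam_of (A : {set I}) : R := \sum_(i in A) lam i.
Definition mu_of (A : {set K}) : R := \sum_(k in A) mu k.
Definition Kset (A : {set I}) : {set K} := [set k | [exists i in A, adj i k]].
Definition Iset (A : {set K}) : {set I} := [set i | [exists k in A, adj i k]].

Definition stable : Prop :=
  forall A : {set I}, A != finset.set0 -> A != finset.setT -> lam_of A < mu_of (Kset A).

(* A subset of I u K is represented as a pair (AI, AK). *)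
Definition independent (AI : {set I}) (AK : {set K}) : bool :=
  [forall i in AI, forall k in AK, ~~ adj i k].
Definition inJ (AI : {set I}) (AK : {set K}) : bool :=
  [&& independent AI AK, AI != finset.set0 & AK != finset.set0].
Definition inJ0 (AI : {set I}) (AK : {set K}) : bool :=
  inJ AI AK || ((AI == finset.set0) && (AK == finset.set0)).

Definition in_Pi n (c : n.-tuple I) (d : n.-tuple K) : bool :=
  all (fun i => all (fun k => ~~ adj i k) d) c.

Definition prefix_set (T : finType) (s : seq T) (p : nat) : {set T} :=
  [set x | x \in take p.+1 s].

(* unnormalised stationary weight: prod_{p=1}^n
   lam_{c_p}/mu(K({c_1..c_p})) * mu_{d_p}/lam(I({d_1..d_p})) *)
Definition weight n (c : n.-tuple I) (d : n.-tuple K) : R :=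
  \prod_(p < n) (lam (tnth c p) / mu_of (Kset (prefix_set c p))
                 * (mu (tnth d p) / lam_of (Iset (prefix_set d p)))).

Definition rseries (u : nat -> R) : R := limn (fun N => \sum_(0 <= n < N) u n).

Definition Zconst : R :=
  rseries (fun n => \sum_(c : n.-tuple I) \sum_(d : n.-tuple K | in_Pi c d) weight c d).
Definition pi_empty : R := Zconst^-1.

Definition pi_state n (c : n.-tuple I) (d : n.-tuple K) : R := pi_empty * weight c d.

Definition in_PiA (AI : {set I}) (AK : {set K}) n (c : n.-tuple I) (d : n.-tuple K) : bool :=
  [&& in_Pi c d, [set x | x \in c] == AI & [set x | x \in d] == AK].

Definition piA (AI : {set I}) (AK : {set K}) : R :=
  if inJ0 AI AK then
    rseries (fun n => \sum_(c : n.-tuple I) \sum_(d : n.-tuple K | in_PiA AI AK c d)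
                         pi_state c d)
  else 0.

Definition ellI (AI : {set I}) (AK : {set K}) : R :=
  if inJ0 AI AK then
    rseries (fun n => \sum_(c : n.-tuple I) \sum_(d : n.-tuple K | in_PiA AI AK c d)
                         n%:R * pi_state c d)
  else 0.

Definition LI : R :=
  rseries (fun n => \sum_(c : n.-tuple I) \sum_(d : n.-tuple K | in_Pi c d)
                       n%:R * pi_state c d).

Definition Delta (AI : {set I}) (AK : {set K}) : R :=
  mu_of (Kset AI) * lam_of (Iset AK) - lam_of AI * mu_of AK.

End Model.

(* The weight of a state (c, d) factorises into a part depending only on c and
   a part depending only on d.  Hence the unnormalised mass m_A(n) of the states of
   length n with class sets A = (A_I, A_K) is a product, and deleting the last
   customer and the last server of such a state gives the recursion
     x y m_A(n+1) = a b m_A(n) + h_A(n),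
   where x = mu(K(A_I)), y = lam(I(A_K)), a = lam(A_I), b = mu(A_K) and h_A(n)
   combines the m_B(n) for the pairs B obtained from A by deleting a customer
   class, a server class, or both.  Stability gives a b < x y for independent A,
   so summing the recursion and its n-weighted form over n shows, by induction
   on |A_I| + |A_K|, that sum_n m_A(n) and sum_n n m_A(n) converge; the limit of
   the n-weighted sums is the identity, since ell_I(A) = pi(empty) sum_n n m_A(n). *)

From Pilot Require Import Defs.
From mathcomp Require Import all_boot all_order all_algebra.
From mathcomp Require Import all_classical all_reals all_analysis.
From mathcomp Require Import ring lra.
(* Re-imported so that set0, setT, subsetP, ... denote the finset notions. *)
From mathcomp Require Import fintype finset.
Import Order.TTheory GRing.Theory Num.Theory.
Import numFieldNormedType.Exports.
Set Implicit Arguments. Unset Strict Implicit. Unset Printing Implicit Defensive.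
Local Open Scope classical_set_scope.
Local Open Scope ring_scope.

Section linear_recurrence.
Variables (R : realType) (u v : R) (f h : nat -> R).
Hypothesis f_rec : forall n, u * f n.+1 = v * f n + h n.

Lemma series_rec N : u * series f N.+1 = u * f 0%N + v * series f N + series h N.
Proof.
elim: N => [|N IH]; first by rewrite seriesSr !seriesEnat /= !big_geq //; lra.
by rewrite seriesSr mulrDr IH f_rec [series f N.+1]seriesSr [series h N.+1]seriesSr; lra.
Qed.

Hypotheses (v_ge0 : 0 <= v) (v_lt_u : v < u).
Hypotheses (f_ge0 : forall n, 0 <= f n) (h_ge0 : forall n, 0 <= h n).

Lemma is_cvg_series_rec : cvgn (series h) -> cvgn (series f).
Proof.
move=> cvg_h.
have nd_f : nondecreasing_seq (series f) by apply: nondecreasing_series.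
have h_le : forall N, series h N <= limn (series h).
  by apply: nondecreasing_cvgn_le => //; apply: nondecreasing_series.
apply: nondecreasing_is_cvgn => //.
exists ((u * f 0%N + limn (series h)) / (u - v)) => _ [N _ <-].
rewrite ler_pdivlMr ?subr_gt0 //.
(* As series f is nondecreasing, series_rec gives
   (u - v) * series f N <= u * f 0 + series h N. *)
have recN := series_rec N; have SN_le := nd_f _ _ (leqnSn N); have HN_le := h_le N.
have SN_ge0 : 0 <= series f N by rewrite seriesEnat; apply: sumr_ge0.
have f0_ge0 := f_ge0 0%N; have u_gt0 := le_lt_trans v_ge0 v_lt_u.
nra.
Qed.

Lemma lim_series_rec : cvgn (series h) ->
  u * limn (series f) = u * f 0%N + v * limn (series f) + limn (series h).
Proof.
move=> cvg_h; have cvg_f := is_cvg_series_rec cvg_h.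
have lhs : u * series f n.+1 @[n --> \oo] --> u * limn (series f).
  by apply: cvgMl_tmp; rewrite (cvg_shiftS (series f)).
rewrite (funext series_rec) in lhs.
have rhs : u * f 0%N + v * series f n + series h n @[n --> \oo] -->
             u * f 0%N + v * limn (series f) + limn (series h).
  by apply: cvgD => //; apply: cvgD; [exact: cvg_cst | exact: cvgMl_tmp].
exact: etrans (esym (cvg_lim _ lhs)) (cvg_lim _ rhs).
Qed.

End linear_recurrence.

Section natmul_recurrence.
Variables (R : realType) (u v : R) (f h : nat -> R).
Hypotheses (v_ge0 : 0 <= v) (v_lt_u : v < u).
Hypotheses (f_ge0 : forall n, 0 <= f n) (h_ge0 : forall n, 0 <= h n).
Hypotheses (f_rec : forall n, u * f n.+1 = v * f n + h n) (f0 : f 0%N = 0).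
Hypotheses (cvg_f : cvgn (series f)) (cvg_nh : cvgn (series (fun n => n%:R * h n))).

Let nf n := n%:R * f n.
Let nh' n := u * f n.+1 + n%:R * h n.

Let nf_rec n : u * nf n.+1 = v * nf n + nh' n.
Proof. by rewrite /nf /nh' mulrCA f_rec -natr1; ring. Qed.

Let cvg_nh' : series nh' @ \oo --> u * limn (series f) + limn (series (fun n => n%:R * h n)).
Proof.
have -> : series nh' = fun N => u * series f N.+1 + series (fun n => n%:R * h n) N.
  apply: funext => N; rewrite !seriesEnat /= big_split /= -mulr_sumr.
  by rewrite [in RHS]big_nat_recl // f0 add0r.
by apply: cvgD => //; apply: cvgMl_tmp; rewrite (cvg_shiftS (series f)).
Qed.

Let nf_ge0 n : 0 <= nf n. Proof. by rewrite /nf mulr_ge0. Qed.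

Let nh'_ge0 n : 0 <= nh' n.
Proof. by rewrite /nh' addr_ge0 // mulr_ge0 // ltW // (le_lt_trans v_ge0). Qed.

Lemma is_cvg_series_natmul_rec : cvgn (series (fun n => n%:R * f n)).
Proof. exact: is_cvg_series_rec nf_rec v_ge0 v_lt_u nf_ge0 nh'_ge0 (cvgP _ cvg_nh'). Qed.

Lemma lim_series_natmul_rec :
  u * limn (series (fun n => n%:R * f n)) =
  v * limn (series (fun n => n%:R * f n)) + u * limn (series f)
  + limn (series (fun n => n%:R * h n)).
Proof.
rewrite [LHS](lim_series_rec nf_rec v_ge0 v_lt_u nf_ge0 nh'_ge0 (cvgP _ cvg_nh')).
by rewrite /nf mul0r mulr0 add0r (cvg_lim (@Rhausdorff R) cvg_nh') addrA.
Qed.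

End natmul_recurrence.

Lemma series_sum (R : realType) (T : Type) (r : seq T) (P : pred T) (F : T -> nat -> R) N :
  series (fun n => \sum_(t <- r | P t) F t n) N = \sum_(t <- r | P t) series (F t) N.
Proof. by rewrite !seriesEnat /= exchange_big. Qed.

Lemma cvg_series_sum (R : realType) (T : Type) (r : seq T) (P : pred T)
    (F : T -> nat -> R) (l : T -> R) :
  (forall t, P t -> series (F t) @ \oo --> l t) ->
  series (fun n => \sum_(t <- r | P t) F t n) @ \oo --> \sum_(t <- r | P t) l t.
Proof.
move=> cvgF; rewrite (funext (series_sum r P F)).
by apply: cvg_big => //; exact: add_continuous.
Qed.

Lemma series_tail0 (R : realType) (f : nat -> R) :
  (forall n, f n.+1 = 0) -> series f @ \oo --> f 0%N.
Proof.
move=> f0; rewrite -cvg_shiftS.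
suff -> : (fun n => series f n.+1) = fun=> f 0%N by exact: cvg_cst.
apply: funext; elim=> [|n IH]; first by rewrite seriesSr seriesEnat /= big_geq // add0r.
by rewrite seriesSr IH f0 addr0.
Qed.

Lemma rseriesE (R : realType) (u : nat -> R) : rseries u = limn (series u).
Proof. by rewrite /rseries seriesEnat. Qed.

Lemma sumr_le_subset (R : numDomainType) (T : finType) (F : T -> R) (A B : {set T}) :
  (forall x, 0 <= F x) -> A \subset B -> \sum_(x in A) F x <= \sum_(x in B) F x.
Proof.
move=> F_ge0 AB; rewrite [leRHS](big_setID A) /= (setIidPr AB) lerDl.
exact: sumr_ge0.
Qed.

Lemma sumr_setC (R : numDomainType) (T : finType) (F : T -> R) (A : {set T}) :
  \sum_(x in ~: A) F x = \sum_x F x - \sum_(x in A) F x.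
Proof.
rewrite [\sum_x F x](bigID (mem A)) /= addrC addrK.
by apply: eq_bigl => x; rewrite inE.
Qed.

Lemma set_rcons (T : finType) (s : seq T) x : [set:: rcons s x] = x |: [set:: s].
Proof. by apply/setP => y; rewrite !inE mem_rcons in_cons. Qed.

Lemma setU1_eq (T : finType) (x : T) (S A : {set T}) :
  (x |: S == A) = (x \in A) && ((S == A) || (S == A :\ x)).
Proof.
apply/eqP/andP => [<- | [xA /orP [/eqP -> | /eqP ->]]]; last by rewrite setD1K.
  split; first exact: setU11.
  have [xS|xS] := boolP (x \in S); last by rewrite setU1K ?eqxx ?orbT.
  by rewrite (setUidPr _) ?eqxx // sub1set.
by apply/setUidPr; rewrite sub1set.
Qed.

Lemma big_setU1_eq (V : nmodType) (T : finType) (S A : {set T}) (F : T -> V) :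
  \sum_(x | x |: S == A) F x =
  \sum_(x in A | S == A) F x + \sum_(x in A | S == A :\ x) F x.
Proof.
rewrite big_mkcond [X in _ = X + _]big_mkcond [X in _ = _ + X]big_mkcond.
rewrite -big_split /=; apply: eq_bigr => x _.
rewrite setU1_eq; case: (boolP (x \in A)) => //= xA; rewrite ?addr0 //.
case: (eqVneq S A) => [SA|_] /=; last by rewrite add0r.
have /negbTE -> : S != A :\ x by apply/eqP => E; move: xA; rewrite -SA E setD11.
by rewrite addr0.
Qed.

Lemma set_tuple_neq0 (T : finType) n (s : n.+1.-tuple T) : [set:: s] != set0.
Proof. by apply/set0Pn; exists (thead s); rewrite inE mem_tnth. Qed.

Lemma big_tupleS (V : nmodType) (T : finType) n (F : n.+1.-tuple T -> V) :
  \sum_(c : n.+1.-tuple T) F c = \sum_(c : n.-tuple T) \sum_(x : T) F (rcons_tuple c x).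
Proof.
rewrite pair_big /= (reindex (fun p : n.-tuple T * T => rcons_tuple p.1 p.2)) //.
exists (fun c : n.+1.-tuple T =>
          (belast_tuple (thead c) (behead_tuple c), last (thead c) (behead c))).
  move=> [[[|y s] /= sz] x] _; congr pair; rewrite ?last_rcons //;
    apply: val_inj; rewrite //= ?belast_rcons // (tnth_nth x).
move=> c _; apply: val_inj => /=.
by rewrite -lastI; case: c => [[|y s] //= _]; rewrite (tnth_nth y).
Qed.

Section tuple_mass.
Variables (R : numFieldType) (T : finType) (w : T -> R) (phi : {set T} -> R).

Definition tweight n (c : n.-tuple T) : R :=
  \prod_(p < n) (w (tnth c p) / phi (prefix_set c p)).

Definition tmass (A : {set T}) n : R :=
  \sum_(c : n.-tuple T | [set:: c] == A) tweight c.

Lemma tweight_rcons n (c : n.-tuple T) x :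
  tweight (rcons_tuple c x) = tweight c * (w x / phi (x |: [set:: c])).
Proof.
rewrite /tweight big_ord_recr /=; congr (_ * _).
  apply: eq_bigr => p _; rewrite !(tnth_nth x) /= nth_rcons size_tuple ltn_ord.
  by rewrite /prefix_set -cats1 takel_cat // size_tuple.
rewrite !(tnth_nth x) /= nth_rcons size_tuple ltnn eqxx -set_rcons.
by congr (_ / phi _); apply/setP => y; rewrite !inE take_oversize // size_rcons size_tuple.
Qed.

Lemma tmass0 A : A != set0 -> tmass A 0 = 0.
Proof.
by move=> A0; rewrite /tmass big_pred0 // => c; rewrite [c]tuple0 set_nil eq_sym (negbTE A0).
Qed.

Lemma tmass_set0 n : tmass set0 n.+1 = 0.
Proof. by rewrite /tmass big_pred0 // => c; apply/negbTE/set_tuple_neq0. Qed.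

Lemma tmassS A n : phi A != 0 ->
  phi A * tmass A n.+1 =
  (\sum_(x in A) w x) * tmass A n + \sum_(x in A) w x * tmass (A :\ x) n.
Proof.
move=> phiA0.
(* The last factor of the weight of rcons c x has denominator phi A. *)
have -> : phi A * tmass A n.+1 =
    \sum_(c : n.-tuple T) \sum_(x | x |: [set:: c] == A) w x * tweight c.
  rewrite /tmass big_mkcond big_tupleS mulr_sumr; apply: eq_bigr => c _.
  rewrite mulr_sumr [RHS]big_mkcond; apply: eq_bigr => x _.
  rewrite set_rcons tweight_rcons; case: eqP => [->|_]; last by rewrite mulr0.
  by field.
under eq_bigr do rewrite big_setU1_eq.
rewrite big_split /= /tmass; congr (_ + _).
  rewrite mulr_sumr [RHS]big_mkcond; apply: eq_bigr => c _ /=.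
  case: eqP => _; last by rewrite big_pred0 // => x; rewrite andbF.
  by rewrite mulr_suml; apply: eq_bigl => x; rewrite andbT.
under eq_bigr do rewrite big_mkcondr.
rewrite exchange_big; apply: eq_bigr => x _.
by rewrite mulr_sumr [RHS]big_mkcond.
Qed.

Lemma tmass_ge0 A n :
  (forall x, 0 <= w x) -> (forall B, 0 <= phi B) -> 0 <= tmass A n.
Proof.
by move=> w_ge0 phi_ge0; apply: sumr_ge0 => c _; apply: prodr_ge0 => p _; apply: divr_ge0.
Qed.

End tuple_mass.

Section matching_model.
Variables (R : realType) (I K : finType) (adj : I -> K -> bool).
Variables (lam : I -> R) (mu : K -> R).

Local Notation lam_of := (lam_of lam).
Local Notation mu_of := (mu_of mu).
Local Notation Kset := (Kset adj).
Local Notation Iset := (Iset adj).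
Local Notation independent := (independent adj).
Local Notation inJ := (inJ adj).
Local Notation Delta := (Delta adj lam mu).
Local Notation inJ0 := (inJ0 adj).
Local Notation in_Pi := (in_Pi adj).
Local Notation in_PiA := (in_PiA adj).
Local Notation pi_state := (pi_state adj lam mu).
Local Notation pi_empty := (pi_empty adj lam mu).

Implicit Types (AI BI : {set I}) (AK BK : {set K}) (i : I) (k : K).
Implicit Types (G : {set I} -> {set K} -> R).

Lemma independentP AI AK :
  reflect (forall i k, i \in AI -> k \in AK -> ~~ adj i k) (independent AI AK).
Proof.
apply: (iffP forall_inP) => [H i k iA kA|H i iA]; last by apply/forall_inP => k; apply: H.
exact: forall_inP (H i iA) k kA.
Qed.

Lemma independentS AI BI AK BK :
  BI \subset AI -> BK \subset AK -> independent AI AK -> independent BI BK.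
Proof.
move=> /subsetP sI /subsetP sK /independentP H; apply/independentP => i k iB kB.
by apply: H; [apply: sI | apply: sK].
Qed.

Lemma Kset_subset_setC AI AK : independent AI AK -> Kset AI \subset ~: AK.
Proof.
move=> /independentP H; apply/subsetP => k; rewrite !inE => /exists_inP [i iA ik].
by apply/negP => kA; move: (H i k iA kA); rewrite ik.
Qed.

Lemma inJ0_independent AI AK : inJ0 AI AK -> independent AI AK.
Proof.
case/orP => [/and3P [] // | /andP [/eqP -> /eqP ->]].
by apply/independentP => i k; rewrite inE.
Qed.

(* The mass of the states of length n with class sets AI and AK, up to the factor
   pi(empty) (sum_pi_state_PiA). *)
Definition mass AI AK n : R :=
  tmass lam (fun A => mu_of (Kset A)) AI n * tmass mu (fun A => lam_of (Iset A)) AK n.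

Lemma weightE n (c : n.-tuple I) (d : n.-tuple K) :
  weight adj lam mu c d =
  tweight lam (fun A => mu_of (Kset A)) c * tweight mu (fun A => lam_of (Iset A)) d.
Proof. by rewrite /weight /tweight -big_split. Qed.

Lemma mass0 AI AK : (AI != set0) || (AK != set0) -> mass AI AK 0 = 0.
Proof. by rewrite /mass => /orP [] A0; rewrite (tmass0 _ _ A0) ?mul0r ?mulr0. Qed.

Lemma mass_tail0 AI AK n : (AI == set0) || (AK == set0) -> mass AI AK n.+1 = 0.
Proof. by rewrite /mass; case/orP => /eqP ->; rewrite tmass_set0 ?mul0r ?mulr0. Qed.

Definition total_mass AI AK : R := limn (series (mass AI AK)).
Definition first_moment AI AK : R := limn (series (fun n => n%:R * mass AI AK n)).

Lemma first_moment_set0 : first_moment set0 set0 = 0.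
Proof.
have nmass0 n : n.+1%:R * mass set0 set0 n.+1 = 0 by rewrite mass_tail0 ?eqxx ?mulr0.
by rewrite /first_moment (cvg_lim _ (series_tail0 nmass0)) // mul0r.
Qed.

Lemma in_PiA_independent AI AK n (c : n.-tuple I) (d : n.-tuple K) :
  independent AI AK -> in_PiA AI AK c d = ([set:: c] == AI) && ([set:: d] == AK).
Proof.
move=> /independentP indA; apply/and3P/andP => [[] // | [/eqP Ec /eqP Ed]].
split; rewrite /= ?Ec ?Ed //.
by apply/allP => i ic; apply/allP => k kd; apply: indA; rewrite -?Ec -?Ed inE.
Qed.

Lemma sum_pi_state_PiA AI AK n : independent AI AK ->
  \sum_(c : n.-tuple I) \sum_(d : n.-tuple K | in_PiA AI AK c d) pi_state c d =
  pi_empty * mass AI AK n.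
Proof.
move=> indA; rewrite /mass /tmass big_distrlr mulr_sumr [RHS]big_mkcond /=.
apply: eq_bigr => c _; rewrite mulr_sumr.
under eq_bigl do rewrite in_PiA_independent //.
case: eqP => _ /=; last by rewrite big_pred0.
by apply: eq_bigr => d _; rewrite /Defs.pi_state weightE.
Qed.

Lemma mass_notJ0 AI AK n : independent AI AK -> ~~ inJ0 AI AK -> mass AI AK n = 0.
Proof.
rewrite /Defs.inJ0 /Defs.inJ => -> /=; rewrite negb_or negb_and !negbK => /andP [A0 nA0].
by case: n => [|n]; [apply: mass0; rewrite -negb_and | apply: mass_tail0].
Qed.

Lemma in_Pi_inJ0 n (c : n.-tuple I) (d : n.-tuple K) :
  in_Pi c d -> inJ0 [set:: c] [set:: d].
Proof.
move=> Pcd; rewrite /Defs.inJ0 /Defs.inJ.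
have -> : independent [set:: c] [set:: d].
  apply/independentP => i k; rewrite !inE => ic kd.
  exact: allP (allP Pcd i ic) k kd.
case: n c d {Pcd} => [|n] c d; first by rewrite [c]tuple0 [d]tuple0 /= !set_nil !eqxx.
by rewrite !set_tuple_neq0.
Qed.

Lemma in_Pi_partition n (c : n.-tuple I) (d : n.-tuple K) (x : R) :
  (if in_Pi c d then x else 0) =
  \sum_AI \sum_(AK | inJ0 AI AK) (if in_PiA AI AK c d then x else 0).
Proof.
have in_PiAE AI AK : in_PiA AI AK c d = [&& in_Pi c d, [set:: c] == AI & [set:: d] == AK].
  by [].
have [Pcd|nPcd] := boolP (in_Pi c d); last first.
  by rewrite big1 // => AI _; rewrite big1 // => AK _; rewrite in_PiAE (negbTE nPcd).
rewrite (bigD1 [set:: c]) //= (bigD1 [set:: d]) ?in_Pi_inJ0 //= in_PiAE Pcd !eqxx.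
rewrite [X in _ + X]big1 => [|AI ne]; last first.
  by rewrite big1 // => AK _; rewrite in_PiAE Pcd eq_sym (negbTE ne).
rewrite big1 ?addr0 // => AK /andP [_ ne].
by rewrite in_PiAE Pcd eqxx eq_sym (negbTE ne).
Qed.

Lemma sum_in_Pi n (F : n.-tuple I -> n.-tuple K -> R) :
  \sum_(c : n.-tuple I) \sum_(d | in_Pi c d) F c d =
  \sum_AI \sum_(AK | inJ0 AI AK) \sum_(c : n.-tuple I) \sum_(d | in_PiA AI AK c d) F c d.
Proof.
under eq_bigr => c _.
  rewrite big_mkcond; under eq_bigr => d _ do rewrite in_Pi_partition.
  rewrite exchange_big; under eq_bigr => AI _ do rewrite exchange_big.
  over.
rewrite exchange_big; apply: eq_bigr => AI _; rewrite exchange_big.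
by apply: eq_bigr => AK _; apply: eq_bigr => c _; rewrite [RHS]big_mkcond.
Qed.

(* The last three terms of the identity for Delta(A) ell_I(A), as a function of ell_I. *)
Definition inflow G AI AK : R :=
  mu_of AK * \sum_(i in AI) lam i * G (AI :\ i) AK
  + lam_of AI * \sum_(k in AK) mu k * G AI (AK :\ k)
  + \sum_(i in AI) \sum_(k in AK) lam i * mu k * G (AI :\ i) (AK :\ k).

Lemma massS AI AK n :
  mu_of (Kset AI) != 0 -> lam_of (Iset AK) != 0 ->
  mu_of (Kset AI) * lam_of (Iset AK) * mass AI AK n.+1 =
  lam_of AI * mu_of AK * mass AI AK n + inflow (fun BI BK => mass BI BK n) AI AK.
Proof.
move=> x0 y0; rewrite /mass mulrACA.
rewrite (@tmassS _ _ lam (fun A => mu_of (Kset A)) AI n x0).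
rewrite (@tmassS _ _ mu (fun A => lam_of (Iset A)) AK n y0) /inflow.
set cm := tmass lam _; set sm := tmass mu _.
set Sc := \sum_(i in AI) lam i * cm (AI :\ i) n.
set Ss := \sum_(k in AK) mu k * sm (AK :\ k) n.
have e1 : Sc * (mu_of AK * sm AK n) = mu_of AK * \sum_(i in AI) lam i * (cm (AI :\ i) n * sm AK n).
  by rewrite mulrCA [Sc * _]mulr_suml; congr (_ * _); apply: eq_bigr => i _; rewrite mulrA.
have e2 : lam_of AI * cm AI n * Ss = lam_of AI * \sum_(k in AK) mu k * (cm AI n * sm (AK :\ k) n).
  by rewrite -mulrA [_ * Ss]mulr_sumr; congr (_ * _); apply: eq_bigr => k _; rewrite mulrCA.
have e3 : Sc * Ss = \sum_(i in AI) \sum_(k in AK) lam i * mu k * (cm (AI :\ i) n * sm (AK :\ k) n).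
  by rewrite big_distrlr; apply: eq_bigr => i _; apply: eq_bigr => k _; rewrite mulrACA.
rewrite -e1 -e2 -e3 /Defs.lam_of /Defs.mu_of; ring.
Qed.

Definition proper_subpair (BI AI : {set I}) (BK AK : {set K}) : bool :=
  [&& BI \subset AI, BK \subset AK & #|BI| + #|BK| < #|AI| + #|AK|]%N.

Lemma proper_subpairD1l AI AK i : i \in AI -> proper_subpair (AI :\ i) AI AK AK.
Proof. by move=> iA; rewrite /proper_subpair subD1set subxx (cardsD1 i AI) iA addSn ltnS leqnn. Qed.

Lemma proper_subpairD1r AI AK k : k \in AK -> proper_subpair AI AI (AK :\ k) AK.
Proof. by move=> kA; rewrite /proper_subpair subD1set subxx (cardsD1 k AK) kA addnS ltnS leqnn. Qed.

Lemma proper_subpairD1 AI AK i k :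
  i \in AI -> k \in AK -> proper_subpair (AI :\ i) AI (AK :\ k) AK.
Proof.
move=> iA kA; rewrite /proper_subpair !subD1set (cardsD1 i AI) (cardsD1 k AK) iA kA.
by rewrite addSn addnS ltnS leqnSn.
Qed.

Lemma inflowZ a G AI AK :
  a * inflow G AI AK = inflow (fun BI BK => a * G BI BK) AI AK.
Proof.
rewrite /inflow !mulrDr; congr (_ + _ + _).
- by rewrite mulrCA [a * _]mulr_sumr; congr (_ * _); apply: eq_bigr => i _; rewrite mulrCA.
- by rewrite mulrCA [a * _]mulr_sumr; congr (_ * _); apply: eq_bigr => k _; rewrite mulrCA.
- rewrite mulr_sumr; apply: eq_bigr => i _.
  by rewrite mulr_sumr; apply: eq_bigr => k _; rewrite mulrCA.
Qed.

Lemma eq_inflow G G' AI AK :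
  (forall BI BK, BI \subset AI -> BK \subset AK -> G BI BK = G' BI BK) ->
  inflow G AI AK = inflow G' AI AK.
Proof.
move=> eqG; rewrite /inflow; congr (_ * _ + _ * _ + _).
- by apply: eq_bigr => i _; rewrite eqG ?subD1set.
- by apply: eq_bigr => k _; rewrite eqG ?subD1set.
- by apply: eq_bigr => i _; apply: eq_bigr => k _; rewrite eqG ?subD1set.
Qed.

Lemma series_inflow (G : nat -> {set I} -> {set K} -> R) AI AK N :
  series (fun n => inflow (G n) AI AK) N =
  inflow (fun BI BK => series (fun n => G n BI BK) N) AI AK.
Proof.
rewrite /inflow seriesEnat /= !big_split /= -!mulr_sumr.
congr (_ * _ + _ * _ + _); rewrite exchange_big; apply: eq_bigr => i _.
- by rewrite seriesEnat mulr_sumr.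
- by rewrite seriesEnat mulr_sumr.
- by rewrite exchange_big; apply: eq_bigr => k _; rewrite seriesEnat mulr_sumr.
Qed.

Lemma cvg_inflow (G : nat -> {set I} -> {set K} -> R) L AI AK :
  (forall BI BK, proper_subpair BI AI BK AK -> G N BI BK @[N --> \oo] --> L BI BK) ->
  inflow (G N) AI AK @[N --> \oo] --> inflow L AI AK.
Proof.
have add_cont := @add_continuous R^o.
move=> cvgG; apply: cvgD; [apply: cvgD; apply: cvgMl_tmp|].
- apply: cvg_big => // i iA; apply: cvgMl_tmp.
  exact: cvgG (proper_subpairD1l _ iA).
- apply: cvg_big => // k kA; apply: cvgMl_tmp.
  exact: cvgG (proper_subpairD1r _ kA).
- apply: cvg_big => // i iA; apply: cvg_big => // k kA; apply: cvgMl_tmp.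
  exact: cvgG (proper_subpairD1 iA kA).
Qed.

Lemma cvg_series_inflow (G : nat -> {set I} -> {set K} -> R) L AI AK :
  (forall BI BK, proper_subpair BI AI BK AK ->
     series (fun n => G n BI BK) @ \oo --> L BI BK) ->
  series (fun n => inflow (G n) AI AK) @ \oo --> inflow L AI AK.
Proof. by move=> cvgG; rewrite (funext (series_inflow G AI AK)); apply: cvg_inflow. Qed.

Hypothesis conn : graph_connected adj.

Lemma connected_adjK (i0 : I) k : exists i, adj i k.
Proof.
have /connectP [[|[i|k'] p] //= /andP [e _] _] := conn (inr k) (inl i0).
by exists i.
Qed.

Lemma connected_adjI (k0 : K) i : exists k, adj i k.
Proof.
have /connectP [[|[i'|k] p] //= /andP [e _] _] := conn (inl i) (inr k0).
by exists k.
Qed.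

Hypotheses (lam_gt0 : forall i, 0 < lam i) (mu_gt0 : forall k, 0 < mu k).
Hypotheses (lam1 : \sum_i lam i = 1) (mu1 : \sum_k mu k = 1).
Hypothesis stab : stable adj lam mu.

Let lam_ge0 i : 0 <= lam i. Proof. exact: ltW. Qed.
Let mu_ge0 k : 0 <= mu k. Proof. exact: ltW. Qed.

Lemma mu_of_gt0 AK : AK != set0 -> 0 < mu_of AK.
Proof.
case/set0Pn => k kA; apply: lt_le_trans (mu_gt0 k) _.
by rewrite /Defs.mu_of (bigD1 k) //= lerDl sumr_ge0.
Qed.

Lemma stable_servers AK : AK != set0 -> AK != setT -> mu_of AK < lam_of (Iset AK).
Proof.
move=> /set0Pn [k kA] AKT.
have lam_ofC A : lam_of (~: A) = 1 - lam_of A by rewrite /Defs.lam_of sumr_setC lam1.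
have mu_ofC A : mu_of (~: A) = 1 - mu_of A by rewrite /Defs.mu_of sumr_setC mu1.
have AKC0 : 0 < mu_of (~: AK) by apply: mu_of_gt0; rewrite -setCT (inj_eq (@setC_inj _)).
have [B0|B0] := eqVneq (~: Iset AK) set0.
  move: (lam_ofC (Iset AK)) (mu_ofC AK); rewrite B0 {1}/Defs.lam_of big_set0; lra.
have /set0Pn [i0 _] := B0; have [i ik] := connected_adjK i0 k.
have BT : ~: Iset AK != setT.
  apply/eqP => BT; move: (in_setT i); rewrite -BT !inE => /exists_inP; apply.
  by exists k.
(* Stability for the customer classes outside I(AK): their neighbours avoid AK. *)
have indB : independent (~: Iset AK) AK.
  apply/independentP => i' k'; rewrite !inE => /exists_inP ni' k'A.
  by apply/negP => i'k'; apply: ni'; exists k'.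
have := sumr_le_subset mu_ge0 (Kset_subset_setC indB).
by move: (stab B0 BT); rewrite lam_ofC -!/(mu_of _) mu_ofC; lra.
Qed.

Lemma independent_rates AI AK :
  independent AI AK -> AI != set0 -> AK != set0 ->
  lam_of AI * mu_of AK < mu_of (Kset AI) * lam_of (Iset AK).
Proof.
move=> /independentP indA AI0 AK0.
have /set0Pn [i0 iA] := AI0; have /set0Pn [k0 kA] := AK0.
have AIT : AI != setT.
  have [i ik] := connected_adjK i0 k0.
  by apply/eqP => AIT; move: (indA i k0); rewrite AIT in_setT kA ik => /(_ isT isT).
have AKT : AK != setT.
  have [k ik] := connected_adjI k0 i0.
  by apply/eqP => AKT; move: (indA i0 k); rewrite AKT in_setT iA ik => /(_ isT isT).
by apply: ltr_pM; rewrite ?sumr_ge0 ?stab ?stable_servers.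
Qed.

Lemma mass_ge0 AI AK n : 0 <= mass AI AK n.
Proof. by rewrite mulr_ge0 // tmass_ge0 // => A; apply: sumr_ge0. Qed.

Lemma inflow_ge0 G AI AK : (forall BI BK, 0 <= G BI BK) -> 0 <= inflow G AI AK.
Proof.
move=> G_ge0; rewrite /inflow /Defs.lam_of /Defs.mu_of.
by rewrite !addr_ge0 ?mulr_ge0 ?sumr_ge0 // => *; rewrite ?sumr_ge0 // => *; rewrite !mulr_ge0.
Qed.

Section mass_step.
Variables (AI : {set I}) (AK : {set K}).
Hypotheses (indA : independent AI AK) (AI0 : AI != set0) (AK0 : AK != set0).
Hypothesis cvg_sub : forall BI BK, proper_subpair BI AI BK AK ->
  cvgn (series (mass BI BK)) /\ cvgn (series (fun n => n%:R * mass BI BK n)).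

Let lt_ab := independent_rates indA AI0 AK0.
Let ab_ge0 : 0 <= lam_of AI * mu_of AK.
Proof. by rewrite mulr_ge0 // sumr_ge0. Qed.

Let rec n : mu_of (Kset AI) * lam_of (Iset AK) * mass AI AK n.+1 =
  lam_of AI * mu_of AK * mass AI AK n + inflow (fun BI BK => mass BI BK n) AI AK.
Proof.
have /lt0r_neq0 := le_lt_trans ab_ge0 lt_ab.
by rewrite mulf_eq0 negb_or => /andP [x0 y0]; apply: massS.
Qed.

Let massA0 : mass AI AK 0 = 0.
Proof. by rewrite mass0 // AI0. Qed.

Let h_ge0 n : 0 <= inflow (fun BI BK => mass BI BK n) AI AK.
Proof. by apply: inflow_ge0 => *; apply: mass_ge0. Qed.

Let cvg_h : series (fun n => inflow (fun BI BK => mass BI BK n) AI AK) @ \oo -->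
  inflow total_mass AI AK.
Proof. by apply: cvg_series_inflow => BI BK /cvg_sub []. Qed.

Let cvg_nh : series (fun n => n%:R * inflow (fun BI BK => mass BI BK n) AI AK) @ \oo -->
  inflow first_moment AI AK.
Proof.
under eq_fun do rewrite inflowZ.
by apply: cvg_series_inflow => BI BK /cvg_sub [].
Qed.

Lemma is_cvg_mass_step :
  cvgn (series (mass AI AK)) /\ cvgn (series (fun n => n%:R * mass AI AK n)).
Proof.
have cvg_f := is_cvg_series_rec rec ab_ge0 lt_ab (@mass_ge0 AI AK) h_ge0 (cvgP _ cvg_h).
split => //.
exact: is_cvg_series_natmul_rec ab_ge0 lt_ab (@mass_ge0 AI AK) h_ge0 rec massA0
  cvg_f (cvgP _ cvg_nh).
Qed.

Lemma first_moment_step :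
  Delta AI AK * first_moment AI AK =
  mu_of (Kset AI) * lam_of (Iset AK) * total_mass AI AK + inflow first_moment AI AK.
Proof.
have [cvg_f _] := is_cvg_mass_step.
have := lim_series_natmul_rec ab_ge0 lt_ab (@mass_ge0 AI AK) h_ge0 rec massA0
  cvg_f (cvgP _ cvg_nh).
rewrite (cvg_lim _ cvg_nh) // -/(first_moment AI AK) -/(total_mass AI AK) /Defs.Delta.
by move=> E; rewrite mulrBl E; ring.
Qed.

End mass_step.

Lemma is_cvg_mass AI AK : independent AI AK ->
  cvgn (series (mass AI AK)) /\ cvgn (series (fun n => n%:R * mass AI AK n)).
Proof.
move: {2}(#|AI| + #|AK|)%N (erefl (#|AI| + #|AK|)%N) => s.
elim/ltn_ind: s AI AK => s IH AI AK sA indA.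
have [A0|] := boolP ((AI == set0) || (AK == set0)).
  by split; apply: cvgP; apply: series_tail0 => n; rewrite mass_tail0 ?mulr0.
rewrite negb_or => /andP [AI0 AK0]; apply: is_cvg_mass_step => // BI BK /and3P [sI sK].
by rewrite sA => /IH; apply => //; apply: independentS indA.
Qed.

Lemma first_moment_rec AI AK : inJ AI AK ->
  Delta AI AK * first_moment AI AK =
  mu_of (Kset AI) * lam_of (Iset AK) * total_mass AI AK + inflow first_moment AI AK.
Proof.
case/and3P => indA AI0 AK0; apply: first_moment_step => // BI BK /and3P [sI sK _].
by apply: is_cvg_mass; apply: independentS indA.
Qed.

Lemma piA_total_mass AI AK :
  independent AI AK -> piA adj lam mu AI AK = pi_empty * total_mass AI AK.
Proof.
move=> indA; rewrite /piA /total_mass; case: ifP => J0.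
  rewrite rseriesE (funext (fun n => sum_pi_state_PiA n indA)) lim_seriesZ //.
  by have [] := is_cvg_mass indA.
have massA0 n := mass_notJ0 n indA (negbT J0).
by rewrite (cvg_lim _ (series_tail0 (fun n => massA0 n.+1))) // massA0 mulr0.
Qed.

Lemma cvg_series_PiA_length AI AK : independent AI AK ->
  series (fun n => \sum_(c : n.-tuple I) \sum_(d | in_PiA AI AK c d) n%:R * pi_state c d)
    @ \oo --> pi_empty * first_moment AI AK.
Proof.
move=> indA.
have -> : (fun n => \sum_(c : n.-tuple I) \sum_(d | in_PiA AI AK c d) n%:R * pi_state c d) =
          (fun n => pi_empty * (n%:R * mass AI AK n)).
  apply: funext => n; rewrite mulrCA -sum_pi_state_PiA // mulr_sumr.
  by apply: eq_bigr => c _; rewrite mulr_sumr.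
rewrite seriesZ; apply: cvgZl_tmp.
by have [_] := is_cvg_mass indA.
Qed.

Lemma ellI_first_moment AI AK : independent AI AK ->
  ellI adj lam mu AI AK = pi_empty * first_moment AI AK.
Proof.
move=> indA; rewrite /ellI; case: ifP => J0.
  by rewrite rseriesE (cvg_lim _ (cvg_series_PiA_length indA)).
have nmass0 n : n%:R * mass AI AK n = 0 by rewrite mass_notJ0 ?J0 ?mulr0.
by rewrite /first_moment (cvg_lim _ (series_tail0 (fun n => nmass0 n.+1))) // mul0r mulr0.
Qed.

Lemma LI_sum_ellI : LI adj lam mu = \sum_AI \sum_(AK | inJ0 AI AK) ellI adj lam mu AI AK.
Proof.
rewrite /LI rseriesE (funext (fun n => sum_in_Pi (fun c d => n%:R * pi_state c d))).
apply: cvg_lim => //; apply: cvg_series_sum => AI _; apply: cvg_series_sum => AK J0.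
rewrite ellI_first_moment ?inJ0_independent //.
exact/cvg_series_PiA_length/inJ0_independent.
Qed.

End matching_model.

Theorem proposition3 (R : realType) (I K : finType) (adj : I -> K -> bool)
  (lam : I -> R) (mu : K -> R)
  (Hconn : graph_connected adj)
  (Hlam : forall i, 0 < lam i) (Hmu : forall k, 0 < mu k)
  (Hlam1 : \sum_(i : I) lam i = 1) (Hmu1 : \sum_(k : K) mu k = 1)
  (Hstab : stable adj lam mu) :
  LI adj lam mu = \sum_(AI : {set I}) \sum_(AK : {set K} | inJ0 adj AI AK) ellI adj lam mu AI AK
  /\ ellI adj lam mu finset.set0 finset.set0 = 0
  /\ (forall (AI : {set I}) (AK : {set K}), inJ adj AI AK ->
        Delta adj lam mu AI AK * ellI adj lam mu AI AK =
          mu_of mu (Kset adj AI) * lam_of lam (Iset adj AK) * piA adj lam mu AI AK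
        + mu_of mu AK * \sum_(i in AI) lam i * ellI adj lam mu (AI :\ i) AK
        + lam_of lam AI * \sum_(k in AK) mu k * ellI adj lam mu AI (AK :\ k)
        + \sum_(i in AI) \sum_(k in AK) lam i * mu k * ellI adj lam mu (AI :\ i) (AK :\ k)).
Proof.
have ellIE := ellI_first_moment Hconn Hlam Hmu Hlam1 Hmu1 Hstab.
split; [exact: LI_sum_ellI | split].
  by rewrite ellIE ?first_moment_set0 ?mulr0 //; apply/independentP => i k; rewrite inE.
move=> AI AK JA; have indA : independent adj AI AK by case/and3P: JA.
rewrite piA_total_mass // ellIE // mulrCA first_moment_rec // mulrDr mulrCA inflowZ.
rewrite (@eq_inflow _ _ _ _ _ _ (ellI adj lam mu)) => [|BI BK sI sK].
  by rewrite /inflow !addrA.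
by rewrite ellIE //; apply: independentS indA.
Qed.
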